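(* Let $n\ge 5$ and let $G$ be a connected simple graph with $n$ vertices and $n+1$ edges. Then \[ \operatorname{avm}(G)\ge \frac{4n-11}{2n-5}. \] Moreover, equality holds if and only if $G\cong \theta_n^1(3,3)$.
   Context: For a finite simple graph $G$, a matching is a set of pairwise vertex-disjoint edges; it is maximal if it is not properly contained in another matching. Let $\mathcal{M}(G)$ be the set of maximal matchings of $G$. The average size of maximal matchings is $\operatorname{avm}(G)=\frac{1}{|\mathcal{M}(G)|}\sum_{M\in\mathcal{M}(G)}|M|$. For $n\ge 4$, $\theta_n^1(3,3)$ denotes the graph obtained from $K_4$ minus an edge (vertices $u,v,x,y$ with edges $uv,ux,uy,vx,vy$; i.e. two triangles sharing the edge $uv$) by attaching $n-4$ pendant edges (new leaves) to the vertex $u$, one of the two vertices of degree $3$. *)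

From HB Require Import structures.
From mathcomp Require Import all_boot all_order all_algebra.
Set Implicit Arguments. Unset Strict Implicit. Unset Printing Implicit Defensive.
Import Order.TTheory GRing.Theory Num.Theory.

Section Graphs.
Variable T : finType.
Variable e : rel T.

Definition simple_graph : Prop := symmetric e /\ irreflexive e.

Definition edges : {set {set T}} :=
  [set A : {set T} | [exists x, exists y, e x y && (A == [set x; y])]].

Definition connected_graph : Prop := forall x y : T, connect e x y.

Definition matching (M : {set {set T}}) : bool :=
  (M \subset edges) &&
  [forall A in M, forall B in M, (A != B) ==> [disjoint A & B]].

Definition maximal_matching (M : {set {set T}}) : bool :=
  matching M && [forall M' : {set {set T}}, (matching M' && (M \subset M')) ==> (M' == M)].

Definition max_matchings : {set {set {set T}}} := [set M | maximal_matching M].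

Definition avm : rat :=
  ((\sum_(M in max_matchings) #|M|)%:R / (#|max_matchings|)%:R)%R.

End Graphs.

(* theta_n^1(3,3) on vertex set 'I_n: u = 0, v = 1, x = 2, y = 3;
   edges uv, ux, uy, vx, vy, and pendant edges u--k for 4 <= k < n. *)
Definition theta_base (i j : nat) : bool :=
  [|| (i == 0) && (j == 1), (i == 0) && (j == 2), (i == 0) && (j == 3),
      (i == 1) && (j == 2), (i == 1) && (j == 3) | (i == 0) && (4 <= j)].

Definition theta_rel (n : nat) : rel 'I_n :=
  fun i j => theta_base i j || theta_base j i.

Definition isomorphic (T T' : finType) (e : rel T) (e' : rel T') : Prop :=
  exists f : T -> T', bijective f /\ forall x y, e x y = e' (f x) (f y).
Arguments theta_rel n : clear implicits.

(* If some edge uv meets every edge, connectivity puts every other vertex next to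
   u or v, and the edge count n + 1 leaves exactly two common neighbours.  With a
   and b the numbers of neighbours of u other than v and of v other than u, we get
   a + b = n, and the maximal matchings are {uv} together with the ab - 2 matchings
   {ua', vb'} with a' <> b'; hence avm = 2 - 1/(ab - 1), which is smallest exactly
   when a = 2 or b = 2, i.e. for theta_n^1(3,3).  If no edge meets every edge, no
   maximal matching is a single edge, so avm >= 2 > (4n - 11)/(2n - 5). *)

From HB Require Import structures.
From mathcomp Require Import all_boot all_order all_algebra.
From mathcomp Require Import zify.
Import Order.TTheory GRing.Theory Num.Theory.
Set Implicit Arguments. Unset Strict Implicit. Unset Printing Implicit Defensive.

Section FinsetFacts.
Variable T : finType.

Lemma set2_inj x : injective (fun a : T => [set x; a]).
Proof.
move=> a b /= Eab; have : a \in [set x; b] by rewrite -Eab set22.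
have : b \in [set x; a] by rewrite Eab set22.
by rewrite !inE => /orP[]/eqP-> /orP[]/eqP.
Qed.

Lemma card_offdiag (A B : {set T}) :
  #|[set p in setX A B | p.1 != p.2]| = #|A| * #|B| - #|A :&: B|.
Proof.
have diagE : setX A B :&: [set p | p.1 == p.2] = [set (x, x) | x in A :&: B].
  apply/setP => -[x y]; rewrite !inE /=; apply/idP/imsetP => [|[z]].
    by case/andP=> /andP[xA yB] /eqP Exy; subst y; exists x; rewrite // !inE xA yB.
  by rewrite !inE => /andP[zA zB] [-> ->]; rewrite zA zB eqxx.
have := cardsID [set p | p.1 == p.2] (setX A B).
rewrite diagE card_imset => [|x y [] //]; rewrite cardsX => <-.
by rewrite addKn; apply: eq_card => p; rewrite !inE andbC.
Qed.

End FinsetFacts.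

(* The adjacency of theta_n^1(3,3) seen through three predicates picking out u,
   v and {x, y}; every remaining vertex is a leaf at u. *)
Definition theta_adj (T : Type) (is_c is_d is_xy : pred T) : rel T := fun a b =>
  [|| is_c a && ~~ is_c b, is_c b && ~~ is_c a, is_d a && is_xy b | is_d b && is_xy a].

Lemma theta_relE n (i j : 'I_n) : theta_rel n i j =
  theta_adj (fun k : 'I_n => k == 0 :> nat) (fun k => k == 1 :> nat)
    (fun k => (k == 2 :> nat) || (k == 3 :> nat)) i j.
Proof. by case: i j => [[|[|[|[|i]]]] ?] [[|[|[|[|j]]]] ?]. Qed.

Definition theta_shape (T : finType) (e : rel T) (c d x y : T) : Prop :=
  uniq [:: c; d; x; y] /\ e =2 theta_adj (pred1 c) (pred1 d) (pred2 x y).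

Section ThetaShape.
Variables (T : finType) (e : rel T) (n : nat).
Hypotheses (n_ge4 : 4 <= n) (card_T : #|T| = n).

Lemma isomorphic_theta_shape : isomorphic e (theta_rel n) ->
  exists c d x y, theta_shape e c d x y.
Proof.
case=> f [[g fg gf] ef].
have o k : k < 4 -> {o : 'I_n | val o = k}.
  by move=> k4; exists (Ordinal (leq_trans k4 n_ge4)).
have [[[[o0 v0] [o1 v1]] [o2 v2]] [o3 v3]] := (o 0 isT, o 1 isT, o 2 isT, o 3 isT).
exists (g o0), (g o1), (g o2), (g o3); split.
  rewrite (map_inj_uniq (can_inj gf) [:: o0; o1; o2; o3]) /= !inE -!val_eqE.
  by rewrite v0 v1 v2 v3.
move=> a b; rewrite ef theta_relE /theta_adj /= -v3 -v2 -v1 -v0 !val_eqE.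
by rewrite -!(can2_eq fg gf).
Qed.

Lemma theta_shape_isomorphic c d x y : theta_shape e c d x y -> isomorphic e (theta_rel n).
Proof.
move=> [uniq_cdxy eE].
pose s := [:: c; d; x; y] ++ [seq a <- enum T | a \notin [:: c; d; x; y]].
have uniq_s : uniq s.
  rewrite cat_uniq uniq_cdxy filter_uniq ?enum_uniq // andbT.
  by apply/hasPn => a; rewrite mem_filter => /andP[].
have size_s : size s = n.
  rewrite -card_T cardE; apply/perm_size/uniq_perm; rewrite ?enum_uniq // => a.
  by rewrite mem_cat mem_filter mem_enum; case: (a \in _).
pose G (i : 'I_n) := nth c s i.
have G_nth i k : k < 4 -> (G i == nth c s k) = (val i == k).
  by move=> k4; rewrite nth_uniq ?size_s ?(leq_trans k4 n_ge4).
have G_inj : injective G.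
  by move=> i j /eqP; rewrite /G nth_uniq ?size_s // => /eqP/val_inj.
have [f Gf fG] : bijective G by apply: inj_card_bij; rewrite ?card_ord ?card_T.
exists f; split; first by exists G.
move=> a b; rewrite -{1}(fG a) -{1}(fG b) eE theta_relE /theta_adj /=.
by rewrite !(G_nth _ 0, G_nth _ 1, G_nth _ 2, G_nth _ 3).
Qed.

Lemma isomorphic_thetaP :
  isomorphic e (theta_rel n) <-> exists c d x y, theta_shape e c d x y.
Proof.
split; first exact: isomorphic_theta_shape.
by case=> c [d [x [y]]]; apply: theta_shape_isomorphic.
Qed.
End ThetaShape.

Section Matchings.
Variables (T : finType) (e : rel T).
Hypotheses (esym : symmetric e) (eirr : irreflexive e).

Definition vertex_cover (C : {set T}) : bool :=
  [forall X in edges e, ~~ [disjoint X & C]].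

Lemma edgesP X : reflect (exists x y, e x y /\ X = [set x; y]) (X \in edges e).
Proof.
rewrite inE; apply: (iffP existsP) => [[x /existsP[y /andP[exy /eqP->]]]|[x [y [exy ->]]]].
  by exists x, y.
by exists x; apply/existsP; exists y; rewrite exy eqxx.
Qed.

Lemma edge_neq x y : e x y -> x != y.
Proof. by apply: contraTneq => ->; rewrite eirr. Qed.

Lemma edge_set2 x y : e x y -> [set x; y] \in edges e.
Proof. by move=> exy; apply/edgesP; exists x, y. Qed.

Lemma edge_at X u : X \in edges e -> u \in X -> exists2 a, e u a & X = [set u; a].
Proof.
case/edgesP=> x [y [exy ->]]; rewrite !inE => /orP[]/eqP->; first by exists y.
by exists x; rewrite 1?esym // setUC.
Qed.

Lemma vertex_cover_meet C X :
  vertex_cover C -> X \in edges e -> exists2 t, t \in X & t \in C.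
Proof.
move=> /forall_inP/[apply]; rewrite -setI_eq0 => /set0Pn[t]; rewrite inE => /andP[].
by exists t.
Qed.

Lemma vertex_cover2_meet p q a b : vertex_cover [set p; q] -> e a b ->
  (a \in [set p; q]) || (b \in [set p; q]).
Proof.
move=> cov /edge_set2/(vertex_cover_meet cov)[t]; rewrite !inE.
by case/orP=> /eqP-> ->; rewrite ?orbT.
Qed.

Lemma matching_edge M X : matching e M -> X \in M -> X \in edges e.
Proof. by case/andP=> /subsetP sME _; apply: sME. Qed.

Lemma matching_eq M X Y t : matching e M -> X \in M -> Y \in M ->
  t \in X -> t \in Y -> X = Y.
Proof.
case/andP=> _ /forall_inP dM XM YM tX tY; apply/eqP; apply: contraTT isT => XY.
have /forall_inP/(_ Y YM) := dM X XM; rewrite XY /= -setI_eq0 => /eqP XY0.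
by have := in_set0 t; rewrite -XY0 inE tX tY.
Qed.

Lemma coverP (M : {set {set T}}) t :
  reflect (exists2 Y, Y \in M & t \in Y) (t \in cover M).
Proof. exact: bigcupP. Qed.

Lemma maximal_matchingP M : matching e M ->
  reflect (vertex_cover (cover M)) (maximal_matching e M).
Proof.
move=> mM; rewrite /maximal_matching mM; apply: (iffP forallP) => [maxM | covM M'].
  apply/forall_inP => X XE; apply/negP => dX.
  have XM : X \notin M.
    apply: contraTN dX => XM; case/edgesP: (XE) => x [y [_ EX]].
    rewrite -setI_eq0; apply/set0Pn; exists x; rewrite inE {1}EX set21 /=.
    by apply/coverP; exists X; rewrite // EX set21.
  have mXM : matching e (X |: M).
    case/andP: mM => /subsetP sM /forall_inP dM; apply/andP; split.
      by apply/subsetP => Z /setU1P[->|/sM].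
    have dXM Y : Y \in M -> [disjoint X & Y].
      by move=> YM; apply: disjointWr dX; apply: bigcup_sup.
    apply/forall_inP => A /setU1P[->|AM]; apply/forall_inP => B /setU1P[->|BM];
      apply/implyP => AB.
    - by rewrite eqxx in AB.
    - exact: dXM.
    - by rewrite disjoint_sym; apply: dXM.
    - by have /forall_inP/(_ B BM)/implyP := dM A AM; apply.
  move/implyP: (maxM (X |: M)); rewrite mXM subsetUr => /(_ isT)/eqP XMM.
  by move: XM; rewrite -XMM setU11.
apply/implyP => /andP[mM' sMM']; rewrite eqEsubset sMM' andbT.
apply/subsetP => Z ZM'.
have [t tZ /coverP[Y YM tY]] := vertex_cover_meet covM (matching_edge mM' ZM').
by rewrite (matching_eq mM' ZM' (subsetP sMM' _ YM) tZ tY).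
Qed.

Lemma matching0 : matching e set0.
Proof. by rewrite /matching sub0set; apply/forall_inP => A; rewrite inE. Qed.

Lemma exists_maximal_matching : exists M, maximal_matching e M.
Proof.
have [M mM maxM] := arg_maxnP (fun M : {set {set T}} => #|M|) matching0.
exists M; rewrite /maximal_matching mM; apply/forallP => M'.
by apply/implyP => /andP[mM' sMM']; rewrite eq_sym eqEcard sMM'; apply: maxM.
Qed.

Lemma maximal_matching_gt1 M : ~~ [exists X in edges e, vertex_cover X] ->
  edges e != set0 -> maximal_matching e M -> 1 < #|M|.
Proof.
move=> nodom /set0Pn[X0 X0E] maxM; have mM : matching e M by case/andP: maxM.
have covM := elimT (maximal_matchingP mM) maxM.
rewrite ltnNge leq_eqVlt ltnS leqn0.
apply/negP => /orP[/cards1P[X MX] | /eqP/cards0_eq M0].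
  case/negP: nodom; apply/exists_inP; exists X; last by rewrite -(cover1 X) -MX.
  by apply: matching_edge mM _; rewrite MX set11.
have [t _] := vertex_cover_meet covM X0E.
by rewrite M0 /cover big_set0 inE.
Qed.

Lemma avm_ge2 : ~~ [exists X in edges e, vertex_cover X] -> edges e != set0 ->
  (2 <= avm e)%R.
Proof.
move=> nodom E0; have [M0 maxM0] := exists_maximal_matching.
have mm_gt0 : 0 < #|max_matchings e| by apply/card_gt0P; exists M0; rewrite inE.
rewrite /avm ler_pdivlMr ?ltr0n // -natrM ler_nat mulnC -sum_nat_const.
by apply: leq_sum => M; rewrite inE; apply: maximal_matching_gt1.
Qed.

Lemma vertex_coverS (C D : {set T}) : C \subset D -> vertex_cover C -> vertex_cover D.
Proof.
move=> CD /forall_inP covC; apply/forall_inP => X /covC; apply: contra.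
exact: disjointWr.
Qed.

Lemma matching1 X : X \in edges e -> matching e [set X].
Proof.
move=> XE; apply/andP; split; first by rewrite sub1set.
by apply/forall_inP => Y /set1P-> ; apply/forall_inP => Z /set1P->; rewrite eqxx.
Qed.

Lemma matching2 X Y : X \in edges e -> Y \in edges e -> [disjoint X & Y] ->
  matching e [set X; Y].
Proof.
move=> XE YE dXY; apply/andP; split.
  by apply/subsetP => Z /set2P[]->.
apply/forall_inP => Z1 /set2P[]-> ; apply/forall_inP => Z2 /set2P[]->;
  rewrite ?eqxx ?dXY 1?disjoint_sym ?dXY ?implybT //.
Qed.

Definition nbrs_except (w z : T) : {set T} := [set a | e w a & a != z].

(* If u were uncovered, v would be matched to some b, and an edge ua with a <> b
   could be added to M. *)
Lemma maximal_matching_covers u v M : e u v -> vertex_cover [set u; v] ->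
  1 < #|nbrs_except u v| -> maximal_matching e M -> [set u; v] \notin M ->
  u \in cover M.
Proof.
move=> euv cov A2 maxM uvM; apply: contraT => uM.
have mM : matching e M by case/andP: maxM.
have covM := elimT (maximal_matchingP mM) maxM.
have [t tuv tM] := vertex_cover_meet covM (edge_set2 euv).
have vM : v \in cover M by case/set2P: tuv tM => -> //; rewrite (negPf uM).
have /coverP[Y YM vY] := vM.
have [b evb EY] := edge_at (matching_edge mM YM) vY.
have /card_gt0P[a] : 0 < #|nbrs_except u v :\ b|.
  by move: A2; rewrite (cardsD1 b); case: (b \in _) => // /ltnW.
rewrite !inE => /and3P[ab eua av].
have [s sua sM] := vertex_cover_meet covM (edge_set2 eua).
have aM : a \in cover M by case/set2P: sua sM => -> //; rewrite (negPf uM).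
have /coverP[Z ZM aZ] := aM.
have [r rZ /set2P[] Er] := vertex_cover_meet cov (matching_edge mM ZM); subst r.
  by case/negP: uM; apply/coverP; exists Z.
move: aZ; rewrite (matching_eq mM ZM YM rZ vY) EY !inE.
by rewrite (negPf av) (negPf ab).
Qed.

Lemma notin_nbrs_except w z a : w != z -> a \in nbrs_except w z -> z \notin [set w; a].
Proof. by move=> wz; rewrite !inE => /andP[_ az]; rewrite negb_or eq_sym wz eq_sym az. Qed.

Section DominatingEdge.
Variables u v : T.
Hypotheses (euv : e u v) (cov : vertex_cover [set u; v]).

Let A := nbrs_except u v.
Let B := nbrs_except v u.

Let evu : e v u. Proof. by rewrite esym. Qed.
Let cov_vu : vertex_cover [set v; u]. Proof. by rewrite setUC. Qed.
Let u_neq_v : u != v. Proof. exact: edge_neq euv. Qed.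
Let v_neq_u : v != u. Proof. by rewrite eq_sym u_neq_v. Qed.

Lemma edges_dominating :
  edges e = [set u; v] |: ([set [set u; a] | a in A] :|: [set [set v; b] | b in B]).
Proof.
apply/setP => X; apply/idP/idP => [XE | ].
  rewrite !inE; have [t tX /set2P[] Et] := vertex_cover_meet cov XE; subst t.
    have [a eua ->] := edge_at XE tX.
    have [->|av] := eqVneq a v; first by rewrite eqxx.
    by apply/orP; right; apply/orP; left; apply/imsetP; exists a; rewrite // inE eua.
  have [b evb ->] := edge_at XE tX.
  have [->|bu] := eqVneq b u; first by rewrite setUC eqxx.
  by apply/orP; right; apply/orP; right; apply/imsetP; exists b; rewrite // inE evb.
rewrite !in_setU in_set1 => /orP[/eqP->|/orP[]/imsetP[a]]; first exact: edge_set2 euv.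
  by rewrite inE => /andP[eua _] ->; apply: edge_set2.
by rewrite inE => /andP[eva _] ->; apply: edge_set2.
Qed.

Lemma card_edges_dominating : #|edges e| = 1 + #|A| + #|B|.
Proof.
have uvA a : a \in A -> [set u; v] != [set u; a].
  by move=> aA; apply: contraNneq (notin_nbrs_except u_neq_v aA) => <-; rewrite set22.
have uvB b : b \in B -> [set u; v] != [set v; b].
  by move=> bB; apply: contraNneq (notin_nbrs_except v_neq_u bB) => <-; rewrite set21.
have AB0 : [set [set u; a] | a in A] :&: [set [set v; b] | b in B] = set0.
  apply/setP => X; rewrite !inE; apply/negbTE/andP => -[/imsetP[a aA ->] /imsetP[b bB]].
  move/eqP; apply/negP.
  by apply: contraNneq (notin_nbrs_except u_neq_v aA) => ->; rewrite set21.
have uv_notin : [set u; v] \notin [set [set u; a] | a in A] :|: [set [set v; b] | b in B].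
  rewrite in_setU negb_or; apply/andP; split; apply/imsetP => -[x xAB /eqP]; apply/negP.
    exact: uvA.
  exact: uvB.
rewrite edges_dominating cardsU1 uv_notin cardsU AB0 cards0 subn0 !card_imset ?addnA //.
all: exact: set2_inj.
Qed.

Definition pair_matching (p : T * T) : {set {set T}} := [set [set u; p.1]; [set v; p.2]].

Lemma maximal_matching_of_cover_uv M : matching e M -> u \in cover M -> v \in cover M ->
  maximal_matching e M.
Proof.
move=> mM uM vM; apply/(maximal_matchingP mM)/(vertex_coverS _ cov).
by apply/subsetP => t /set2P[]->.
Qed.

Lemma uv_maximal : maximal_matching e [set [set u; v]].
Proof.
apply: maximal_matching_of_cover_uv; rewrite ?cover1 ?set21 ?set22 //.
exact/matching1/edge_set2.
Qed.

Lemma pair_matching_maximal a b : a \in A -> b \in B -> a != b ->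
  maximal_matching e (pair_matching (a, b)).
Proof.
rewrite !inE => /andP[eua av] /andP[evb bu] ab.
apply: maximal_matching_of_cover_uv.
- apply: matching2; rewrite ?edge_set2 //.
  by rewrite disjoints_subset subUset !sub1set !inE !negb_or u_neq_v (eq_sym u) bu av ab.
- by apply/coverP; exists [set u; a]; rewrite ?set21 // !inE eqxx.
- by apply/coverP; exists [set v; b]; rewrite ?set21 // !inE eqxx orbT.
Qed.

Let S := [set p in setX A B | p.1 != p.2].

Let mem_S a b : ((a, b) \in S) = [&& a \in A, b \in B & a != b].
Proof. by rewrite /S in_set in_setX andbA. Qed.

Lemma card_pair_matching p : p \in S -> #|pair_matching p| = 2.
Proof.
case: p => a b; rewrite mem_S => /and3P[_ bB _]; rewrite cards2.
suff -> : [set u; a] != [set v; b] by [].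
by apply: contraNneq (notin_nbrs_except v_neq_u bB) => <-; rewrite set21.
Qed.

Lemma pair_matching_inj : {in S &, injective pair_matching}.
Proof.
move=> [a b] [a' b']; rewrite !mem_S => /and3P[aA bB _] /and3P[aA' bB' _] E.
have : [set u; a] \in pair_matching (a', b') by rewrite -E set21.
have : [set v; b] \in pair_matching (a', b') by rewrite -E set22.
rewrite !inE => /orP[/eqP Eb | /eqP/set2_inj ->].
  by move: (notin_nbrs_except u_neq_v aA'); rewrite -Eb set21.
case/orP => [/eqP/set2_inj -> // | /eqP Ea].
by move: (notin_nbrs_except v_neq_u bB'); rewrite -Ea set21.
Qed.

Lemma nbrs_exceptU : connected_graph e -> A :|: B = ~: [set u; v].
Proof.
move=> conn; apply/setP => w; rewrite !inE negb_or.
have [->|wu] := eqVneq w u; first by rewrite eirr /= ?andbF.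
have [->|wv] := eqVneq w v; first by rewrite eirr /= ?andbF.
rewrite !andbT /=; case/connectP: (conn w u) => -[/= _ uw | z p /= /andP[ewz _] _].
  by rewrite uw eqxx in wu.
have := vertex_cover2_meet cov ewz; rewrite !inE (negPf wu) (negPf wv) /=.
by case/orP => /eqP Ez; subst z; rewrite ![e _ w]esym ewz ?orbT.
Qed.

Lemma card_nbrs_except : connected_graph e -> #|edges e| = #|T|.+1 ->
  #|A| + #|B| = #|T| /\ #|A :&: B| = 2.
Proof.
move=> conn cardE; have sumAB : #|A| + #|B| = #|T|.
  by move: cardE; rewrite card_edges_dominating; lia.
split=> //; have := cardsU A B; rewrite nbrs_exceptU //.
have := cardsC [set u; v]; rewrite cards2 u_neq_v.
have := subset_leq_card (subsetIl A B); lia.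
Qed.

Lemma universal_card_nbrs : connected_graph e -> #|edges e| = #|T|.+1 ->
  (forall w, w != u -> e u w) -> #|B| = 2.
Proof.
move=> conn cardE univ; have [sumAB AB2] := card_nbrs_except conn cardE.
have : ~: [set u; v] \subset A.
  by apply/subsetP => w; rewrite !inE negb_or => /andP[wu wv]; rewrite univ.
move/subset_leq_card; have := cardsC [set u; v]; rewrite cards2 u_neq_v.
have := subset_leq_card (subsetIr A B); lia.
Qed.

Lemma card_nbrs2_theta_shape : connected_graph e -> #|edges e| = #|T|.+1 ->
  #|B| = 2 -> exists x y, theta_shape e u v x y.
Proof.
move=> conn cardE B2; have [_ AB2] := card_nbrs_except conn cardE.
have /eqP/setIidPr BA : A :&: B == B by rewrite eqEcard subsetIr AB2 B2.
have AE : A = ~: [set u; v] by rewrite -nbrs_exceptU // (setUidPl BA).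
have /cards2P[x [y [xy BE]]] : #|B| == 2 by rewrite B2.
have : x \in B by rewrite BE set21.
have : y \in B by rewrite BE set22.
rewrite !inE => /andP[evy yu] /andP[evx xu].
have [vx vy] := (edge_neq evx, edge_neq evy).
have eu w : e u w = (w != u).
  have [->|wu] := eqVneq w u; first by rewrite eirr.
  have [->|wv] := eqVneq w v; first by [].
  move: (in_setT w); rewrite -(setUCr [set u; v]) -AE !inE.
  by rewrite (negPf wu) (negPf wv) => /andP[].
have ev w : w != u -> e v w = (w \in [set x; y]) by move=> wu; rewrite -BE /B inE wu andbT.
have eo a b : a \notin [set u; v] -> b \notin [set u; v] -> e a b = false.
  by move=> aN bN; apply/negP => /(vertex_cover2_meet cov); rewrite (negPf aN) (negPf bN).
exists x, y; split.
  by rewrite /= !inE !negb_or u_neq_v !(eq_sym u) xu yu vx vy xy.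
move=> a b; rewrite /theta_adj /=.
have [->|au] := eqVneq a u.
  rewrite eu (negPf u_neq_v) (eq_sym u x) (eq_sym u y) (negPf xu) (negPf yu) /=.
  by rewrite !andbF !orbF.
have [->|bu] := eqVneq b u; first by rewrite esym eu au.
have [->|av] := eqVneq a v.
  by rewrite ev // !inE (negPf vx) (negPf vy) /= !andbF !orbF.
have [->|bv] := eqVneq b v; first by rewrite esym ev // !inE.
by rewrite eo // !inE negb_or ?au ?av ?bu ?bv.
Qed.

Hypotheses (A_gt1 : 1 < #|A|) (B_gt1 : 1 < #|B|).

Lemma maximal_matching_dominating M : maximal_matching e M ->
  M = [set [set u; v]] \/ exists2 p, p \in S & M = pair_matching p.
Proof.
move=> maxM; have mM : matching e M by case/andP: maxM.
have meet_uv Y : Y \in M -> (u \in Y) || (v \in Y).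
  move=> YM; have [t tY /set2P[]<-] := vertex_cover_meet cov (matching_edge mM YM);
    by rewrite tY ?orbT.
have [uvM | uvM] := boolP ([set u; v] \in M).
  left; apply/setP => Y; rewrite inE; apply/idP/eqP => [YM | ->//].
  case/orP: (meet_uv Y YM) => tY; apply: (matching_eq mM YM uvM tY).
    exact: set21.
  exact: set22.
right.
have vuM : [set v; u] \notin M by rewrite setUC.
have /coverP[Yu YuM uYu] := maximal_matching_covers euv cov A_gt1 maxM uvM.
have /coverP[Yv YvM vYv] := maximal_matching_covers evu cov_vu B_gt1 maxM vuM.
have [a eua EYu] := edge_at (matching_edge mM YuM) uYu.
have [b evb EYv] := edge_at (matching_edge mM YvM) vYv.
have av : a != v by apply: contraNneq uvM => <-; rewrite -EYu.
have bu : b != u by apply: contraNneq vuM => <-; rewrite -EYv.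
have ab : a != b.
  apply/eqP => ab; have aYv : a \in Yv by rewrite EYv ab set22.
  move: vYv; rewrite -(matching_eq mM YuM YvM _ aYv) ?EYu ?set22 // !inE.
  by rewrite eq_sym (negPf u_neq_v) eq_sym (negPf av).
exists (a, b); first by rewrite !inE /= eua av evb bu ab.
apply/setP => Y; rewrite !inE /= -EYu -EYv; apply/idP/orP => [YM | [] /eqP-> //].
case/orP: (meet_uv Y YM) => tY; [left | right]; apply/eqP.
  exact: matching_eq mM YM YuM tY uYu.
exact: matching_eq mM YM YvM tY vYv.
Qed.

Lemma max_matchings_dominating :
  max_matchings e = [set [set u; v]] |: [set pair_matching p | p in S].
Proof.
apply/setP => M; rewrite inE in_setU1; apply/idP/idP.
  case/maximal_matching_dominating => [-> | [p pS ->]]; first by rewrite eqxx.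
  by rewrite imset_f ?orbT.
case/orP => [/eqP-> | /imsetP[[a b] pS ->]]; first exact: uv_maximal.
by move: pS; rewrite mem_S => /and3P[]; apply: pair_matching_maximal.
Qed.

Lemma uv_notin_pair_matchings : [set [set u; v]] \notin [set pair_matching p | p in S].
Proof. by apply/imsetP => -[p pS E]; have := card_pair_matching pS; rewrite -E cards1. Qed.

Lemma avm_dominating : avm e =
  ((1 + (#|A| * #|B| - #|A :&: B|) * 2)%:R / (1 + (#|A| * #|B| - #|A :&: B|))%:R)%R.
Proof.
rewrite -card_offdiag -/S.
rewrite /avm max_matchings_dominating big_setU1 ?uv_notin_pair_matchings //= cards1.
rewrite big_imset /=; last exact: pair_matching_inj.
rewrite (eq_bigr (fun=> 2)) ?sum_nat_const; last by move=> p /card_pair_matching.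
by rewrite cardsU1 uv_notin_pair_matchings card_in_imset //; exact: pair_matching_inj.
Qed.
End DominatingEdge.

Lemma theta_shape_universal c d x y : theta_shape e c d x y -> forall w, w != c -> e c w.
Proof. by case=> _ eE w wc; rewrite eE /theta_adj /= eqxx wc. Qed.

Lemma theta_shape_dominating_edge c d x y :
  theta_shape e c d x y -> [exists X in edges e, vertex_cover X].
Proof.
case=> uniq_cdxy eE.
have cd : c != d by case/and4P: uniq_cdxy; rewrite !inE negb_or => /andP[].
apply/exists_inP; exists [set c; d].
  by apply: edge_set2; rewrite eE /theta_adj /= eqxx eq_sym cd.
apply/forall_inP => X /edgesP[a [b [eab ->]]]; rewrite -setI_eq0; apply/set0Pn.
move: eab; rewrite eE => /or4P[] /andP[/eqP-> _].
all: [> exists c | exists c | exists d | exists d].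
all: by rewrite !inE eqxx ?orbT.
Qed.

Lemma isomorphic_theta_dominating u v : e u v -> vertex_cover [set u; v] ->
  connected_graph e -> #|edges e| = #|T|.+1 -> 4 <= #|T| ->
  isomorphic e (theta_rel #|T|) <-> (#|nbrs_except u v| == 2) || (#|nbrs_except v u| == 2).
Proof.
move=> euv cov conn cardE T_ge4.
have evu : e v u by rewrite esym.
have cov' : vertex_cover [set v; u] by rewrite setUC.
rewrite isomorphic_thetaP //; split => [[c [d [x [y shape]]]] | /orP[]/eqP B2].
- have card3 : #|[set u; v; c]| <= 3.
    by rewrite -setUA !cardsU1 cards1; case: (_ \notin _); case: (_ \notin _).
  have /card_gt0P[w] : 0 < #|~: [set u; v; c]| by have := cardsC [set u; v; c]; lia.
  rewrite !inE !negb_or => /andP[/andP[wu wv] wc].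
  have /(vertex_cover2_meet cov) := theta_shape_universal shape wc.
  rewrite !inE (negPf wu) (negPf wv) !orbF => /orP[]/eqP Ec; subst c.
    by rewrite (universal_card_nbrs euv cov conn cardE (theta_shape_universal shape)) orbT.
  by rewrite (universal_card_nbrs evu cov' conn cardE (theta_shape_universal shape)).
- by have [x [y shape]] := card_nbrs2_theta_shape evu cov' conn cardE B2; exists v, u, x, y.
- by have [x [y shape]] := card_nbrs2_theta_shape euv cov conn cardE B2; exists u, v, x, y.
Qed.

End Matchings.

Section AvmBound.
Local Open Scope ring_scope.

Lemma ler_natdiv (R : numFieldType) (a b c d : nat) : (0 < b)%N -> (0 < d)%N ->
  (a%:R / b%:R <= c%:R / d%:R :> R) = (a * d <= c * b)%N.
Proof.
move=> b_gt0 d_gt0; rewrite ler_pdivrMr ?ltr0n // mulrAC ler_pdivlMr ?ltr0n //.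
by rewrite -!natrM ler_nat.
Qed.

Lemma eqr_natdiv (R : numFieldType) (a b c d : nat) : (0 < b)%N -> (0 < d)%N ->
  (a%:R / b%:R == c%:R / d%:R :> R) = (a * d == c * b)%N.
Proof.
move=> b_gt0 d_gt0; rewrite eqr_div ?pnatr_eq0 -?lt0n //.
by rewrite -!natrM eqr_nat.
Qed.

(* Cross-multiplied, the two sides differ by (a - 2)(b - 2). *)
Lemma avm_bound_leif (a b : nat) : (1 < a)%N -> (1 < b)%N ->
  ((4 * (a + b) - 11)%:R / (2 * (a + b) - 5)%:R : rat)
    <= (1 + (a * b - 2) * 2)%:R / (1 + (a * b - 2))%:R ?= iff (a == 2) || (b == 2).
Proof.
move=> a_gt1 b_gt1; have den_gt0 : (0 < 2 * (a + b) - 5)%N by lia.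
split; first by rewrite ler_natdiv //; nia.
rewrite eqr_natdiv //; apply/idP/idP => [/eqP E | ]; last by case/orP=> /eqP->; nia.
have : ((a - 2) * (b - 2) = 0)%N by nia.
by move/eqP; rewrite muln_eq0 !subn_eq0 !eqn_leq a_gt1 b_gt1 !andbT.
Qed.

Lemma avm_bound_lt2 n : (3 <= n)%N -> ((4 * n - 11)%:R / (2 * n - 5)%:R : rat) < 2.
Proof. by move=> n_ge3; rewrite ltr_pdivrMr ?ltr0n -?natrM ?ltr_nat; lia. Qed.

End AvmBound.

Theorem theorem1p2 (n : nat) (T : finType) (e : rel T) :
  5 <= n -> #|T| = n -> simple_graph e -> connected_graph e ->
  #|edges e| = n.+1 ->
  ((((4 * n - 11)%:R / (2 * n - 5)%:R : rat) <= avm e)%R /\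
   (avm e = ((4 * n - 11)%:R / (2 * n - 5)%:R : rat) <-> isomorphic e (theta_rel n))).
Proof.
move=> n_ge5 card_T [esym eirr] conn cardE; subst n.
have [/exists_inP[_ /edgesP[u [v [euv ->]]] cov] | nodom] :=
  boolP [exists X in edges e, vertex_cover e X].
  have [sumAB AB2] := card_nbrs_except esym eirr euv cov conn cardE.
  have A_gt1 : 1 < #|nbrs_except e u v| by rewrite -AB2 subset_leq_card ?subsetIl.
  have B_gt1 : 1 < #|nbrs_except e v u| by rewrite -AB2 subset_leq_card ?subsetIr.
  rewrite (isomorphic_theta_dominating esym eirr euv cov conn cardE (ltnW n_ge5)).
  rewrite (avm_dominating esym eirr euv cov A_gt1 B_gt1) AB2 -sumAB.
  have [le_avm eq_avm] := avm_bound_leif A_gt1 B_gt1.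
  by split=> //; rewrite -eq_avm; split=> [->|/eqP->].
have edges_n0 : edges e != set0 by rewrite -card_gt0 cardE.
have avm_gt := lt_le_trans (avm_bound_lt2 (ltnW (ltnW n_ge5))) (avm_ge2 nodom edges_n0).
split; first exact: ltW.
split=> [avmE | /(isomorphic_thetaP e (ltnW n_ge5) erefl)[c [d [x [y shape]]]]].
  by rewrite avmE ltxx in avm_gt.
by have := theta_shape_dominating_edge shape; rewrite (negPf nodom).
Qed.
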